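(* Let $(G,H,\mathcal{L})$ be a cut-and-project scheme, let $U\subseteq H$ be non-empty open and $W\subseteq H$ compact with $U\subseteq W$, and let $\Gamma\subseteq G$ satisfy $\Lambda_U\subseteq\Gamma\subseteq\Lambda_W$. Let $(s_\alpha)$ be a net in $G$ such that $(s_\alpha+\Gamma)$ converges vaguely to some point set $\Gamma'\subseteq G$ and such that $((-s_\alpha,0)+\mathcal{L})$ converges in $(G\times H)/\mathcal{L}$ to some $(s,t)+\mathcal{L}$. Then $\Lambda_{U+t}\subseteq s+\Gamma'\subseteq\Lambda_{W+t}$.
   Context: A cut-and-project scheme $(G,H,\mathcal{L})$ consists of locally compact abelian groups $G,H$ and a discrete cocompact subgroup $\mathcal{L}\subseteq G\times H$ such that $\pi^G|_{\mathcal{L}}$ is injective and $\pi^H(\mathcal{L})$ is dense in $H$. For $W\subseteq H$, $\Lambda_W=\pi^G(\mathcal{L}\cap(G\times W))$. Point sets are identified with their Dirac combs $\sum_{g\in\Lambda}\delta_g$, and convergence of point sets is vague convergence of these measures. $(G\times H)/\mathcal L$ carries the quotient topology. *)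

From HB Require Import structures.
From mathcomp Require Import all_boot all_order all_algebra.
From mathcomp Require Import all_classical all_reals all_analysis.
Set Implicit Arguments. Unset Strict Implicit. Unset Printing Implicit Defensive.
Import Order.TTheory GRing.Theory Num.Theory numFieldNormedType.Exports.
Local Open Scope classical_set_scope.
Local Open Scope ring_scope.

Definition directed_set (I : Type) (le : I -> I -> Prop) : Prop :=
  [/\ (forall i, le i i),
      (forall i j k, le i j -> le j k -> le i k),
      (exists i : I, True) &
      (forall i j, exists k, le i k /\ le j k)].

Definition net_eventually (I : Type) (le : I -> I -> Prop) (P : I -> Prop) : Prop :=
  exists i0, forall i, le i0 i -> P i.

Definition LCA (G : topologicalZmodType) : Prop :=
  hausdorff_space G /\ locally_compact [set: G].

Definition subgroup (M : zmodType) (L : set M) : Prop :=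
  L 0 /\ (forall x y, L x -> L y -> L (x - y)).

Definition discrete_subset (T : topologicalType) (L : set T) : Prop :=
  forall x, L x -> exists O : set T, [/\ open O, O x & O `&` L = [set x]].

(* L-saturated subsets of M (preimages of subsets of M/L) *)
Definition saturated (M : zmodType) (L : set M) (O : set M) : Prop :=
  forall x l, O x -> L l -> O (x + l).

(* compactness of the quotient M/L with the quotient topology, unfolded:
   open sets of M/L correspond to L-saturated open sets of M *)
Definition cocompact (G H : topologicalZmodType) (L : set (G * H)) : Prop :=
  forall (J : Type) (O : J -> set (G * H)),
    (forall j, open (O j) /\ saturated L (O j)) ->
    \bigcup_j O j = setT ->
    exists D : set J, finite_set D /\ \bigcup_(j in D) O j = setT.

Definition cut_and_project_scheme (G H : topologicalZmodType) (L : set (G * H)) : Prop :=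
  [/\ LCA G, LCA H,
      [/\ subgroup L, discrete_subset L & cocompact L],
      (forall p q, L p -> L q -> p.1 = q.1 -> p = q) &
      closure (snd @` L) = setT].

Definition Lambda (G H : zmodType) (L : set (G * H)) (W : set H) : set G :=
  fst @` (L `&` [set p | W p.2]).

Definition translate (M : zmodType) (s : M) (A : set M) : set M :=
  [set s + a | a in A].

(* the net x_a + L converges to y + L in the quotient topology: every
   open neighbourhood of y + L (= image of an L-saturated open set containing y)
   eventually contains x_a + L *)
Definition quotient_net_cvg (G H : topologicalZmodType) (L : set (G * H))
    (I : Type) (le : I -> I -> Prop) (x : I -> G * H) (y : G * H) : Prop :=
  forall O : set (G * H), open O -> saturated L O -> O y ->
    net_eventually le (fun i => O (x i)).

Definition locally_finite (G : topologicalType) (A : set G) : Prop :=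
  forall K, compact K -> finite_set (A `&` K).

Definition Cc (R : realType) (G : topologicalType) (f : G -> R) : Prop :=
  continuous f /\ exists K : set G, compact K /\ forall x, ~ K x -> f x = 0.

(* integral of f against the Dirac comb of the point set A *)
Definition dirac_comb (R : realType) (G : topologicalType) (A : set G) (f : G -> R) : R :=
  \sum_(g \in A) f g.

Definition vague_net_cvg (R : realType) (G : topologicalType)
    (I : Type) (le : I -> I -> Prop) (A : I -> set G) (B : set G) : Prop :=
  forall f : G -> R, Cc f ->
    forall e : R, 0 < e ->
      net_eventually le (fun i => `|dirac_comb (A i) f - dirac_comb B f| < e).

From HB Require Import structures.
From mathcomp Require Import all_boot all_order all_algebra.
From mathcomp Require Import all_classical all_reals all_analysis.
From mathcomp Require Import finmap lra.
Set Implicit Arguments. Unset Strict Implicit. Unset Printing Implicit Defensive.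
Import Order.TTheory GRing.Theory Num.Theory numFieldNormedType.Exports.
Local Open Scope classical_set_scope.
Local Open Scope ring_scope.

(* Both inclusions test the vague convergence s_a + Gam --> Gam' against bump
   functions, while the convergence of (-s_a, 0) + L to (s, t) + L provides,
   eventually, lattice points l with (-s_a, 0) - l close to (s, t).
   If (x, t + u) is in L with u in U but x - s is not in Gam', a bump at x - s
   vanishing on Gam' has Gam'-comb 0, yet the lattice point (x, t + u) + l lies
   in L with second coordinate in U, so its first coordinate is in Gam and puts
   mass above 1/2 into the comb of s_a + Gam.
   Conversely, for a in Gam' a bump isolating a from the rest of Gam' has
   Gam'-comb 1, so s_a + Gam eventually meets its support; this produces points
   (x, y) arbitrarily close to (s + a, t) with x in Lambda_(W + y).  The set of
   such (x, y) is L - ({0} x W), which is closed because L is locally finite and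
   W is compact, hence s + a is in Lambda_(W + t). *)

Section TopologicalZmoduleFacts.
Variable M : topologicalZmodType.

Lemma continuous_sub (T : topologicalType) (f g : T -> M) :
  continuous f -> continuous g -> continuous (fun x => f x - g x).
Proof.
move=> cf cg x.
apply: (@continuous_comp _ _ _ (fun x => (f x, g x)) (fun p : M * M => p.1 - p.2)).
  by apply: cvg_pair; [exact: cf | exact: cg].
exact: sub_continuous.
Qed.

Lemma continuous_subr (c : M) : continuous (fun z : M => z - c).
Proof. by apply: continuous_sub; [move=> ?; exact: cvg_id | exact: cst_continuous]. Qed.

Lemma continuous_subl (c : M) : continuous (fun z : M => c - z).
Proof. by apply: continuous_sub; [exact: cst_continuous | move=> ?; exact: cvg_id]. Qed.

Lemma nbhs0_sub (A : set M) : nbhs 0 A ->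
  exists2 V, nbhs 0 V & forall a b, V a -> V b -> A (a - b).
Proof.
move=> nA; have : nbhs ((0 : M, 0 : M).1 - (0 : M, 0 : M).2) A by rewrite subr0.
move=> /(@sub_continuous M (0, 0)) [[A1 A2] /= [nA1 nA2] sA12].
by exists (A1 `&` A2); [exact: filterI | move=> a b [a1 _] [_ b2]; exact: (sA12 (a, b))].
Qed.

Lemma nbhs_translate (x : M) (A : set M) : nbhs 0 A -> nbhs x [set y | A (y - x)].
Proof. by move=> nA; apply: continuous_subr; rewrite subrr. Qed.

End TopologicalZmoduleFacts.

Lemma prod_sub_continuous (G H : topologicalZmodType) :
  continuous (fun x : (G * H) * (G * H) => x.1 - x.2).
Proof.
move=> x; apply: cvg_pair.
- apply: (@continuous_sub _ _ (fun x : (G * H) * (G * H) => x.1.1) (fun x => x.2.1)).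
  + by move=> ?; apply: continuous_comp; [exact: cvg_fst | exact: cvg_fst].
  + by move=> ?; apply: continuous_comp; [exact: cvg_snd | exact: cvg_fst].
- apply: (@continuous_sub _ _ (fun x : (G * H) * (G * H) => x.1.2) (fun x => x.2.2)).
  + by move=> ?; apply: continuous_comp; [exact: cvg_fst | exact: cvg_snd].
  + by move=> ?; apply: continuous_comp; [exact: cvg_snd | exact: cvg_snd].
Qed.

(* A topological group structure on [G * H] cannot be canonical on [prod]
   itself, which already carries the one of products of topological vector
   spaces; hence this alias. *)
Definition prod_group (G H : topologicalZmodType) := (G * H)%type.
HB.instance Definition _ (G H : topologicalZmodType) :=
  Topological.copy (prod_group G H) (G * H)%type.
HB.instance Definition _ (G H : topologicalZmodType) :=
  GRing.Zmodule.copy (prod_group G H) (G * H)%type.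
HB.instance Definition _ (G H : topologicalZmodType) :=
  PreTopologicalNmodule_isTopologicalZmodule.Build (prod_group G H)
    (@prod_sub_continuous G H).

Lemma closed_setX (T U : topologicalType) (A : set T) (B : set U) :
  closed A -> closed B -> closed (A `*` B).
Proof.
move=> cA cB; rewrite -[_ `*` _]/(fst @^-1` A `&` snd @^-1` B).
by apply: closedI; apply: preimage_closed => // p _; [exact: cvg_fst | exact: cvg_snd].
Qed.

Lemma compact_nbhs_prod (T U : topologicalType) :
  locally_compact [set: T] -> locally_compact [set: U] ->
  forall x : T * U, exists2 N, nbhs x N & compact N.
Proof.
move=> lcT lcU [x y].
have [A nA [cA _]] := lcT x Logic.I; have [B nB [cB _]] := lcU y Logic.I.
rewrite withinET in nA; rewrite withinET in nB.
by exists (A `*` B); [exists (A, B) | exact: compact_setX].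
Qed.

Lemma finite_setI_compact (T : topologicalType) (S C : set T) : compact C ->
  (forall x, C x -> exists2 N, nbhs x N & finite_set (S `&` N)) ->
  finite_set (S `&` C).
Proof.
move=> cC locS; have [finT|infT] := pselect (finite_set [set: T]).
  exact: sub_finite_set finT.
have Ffre := frechet_properfilter infT.
(* By compactness, the relations [S x -> x <> i] hold on all of [C] at once for
   cofinitely many [i]. *)
have : frechet_filter [set i : T | C `<=` [set x | S x -> x <> i]].
  apply: (proj1 (compact_near_coveringP C) cC T (@frechet_filter T) (fun i x => S x -> x <> i)).
  move=> x /locS [N nN finSN].
  exists (N, ~` (S `&` N)).
    by split=> //; change (finite_set (~` ~` (S `&` N))); rewrite setCK.
  by move=> [y i] /= [Ny SNi] Sy yi; apply: SNi; rewrite -yi.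
by move=> /sub_finite_set; apply=> x [Sx Cx] /(_ x Cx Sx).
Qed.

Lemma subgroupD (M : zmodType) (L : set M) (x y : M) :
  subgroup L -> L x -> L y -> L (x + y).
Proof.
move=> [L0 LB] Lx Ly; have := LB x (0 - y) Lx (LB 0 y L0 Ly).
by rewrite sub0r opprK.
Qed.

Lemma discrete_subgroup_locally_finite (M : topologicalZmodType) (L : set M) :
  subgroup L -> discrete_subset L -> locally_finite L.
Proof.
move=> [L0 LB] dL C cC; apply: finite_setI_compact => // x _.
have [Z [oZ Z0 ZL]] := dL 0 L0.
have [V nV VZ] := @nbhs0_sub M _ (open_nbhs_nbhs (conj oZ Z0)).
exists [set y | V (y - x)]; first exact: nbhs_translate.
pose P := L `&` [set y | V (y - x)].
have uniqP p q : P p -> P q -> p = q.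
  move=> [Lp Vp] [Lq Vq]; apply/subr0_eq.
  have : (Z `&` L) (p - q).
    by split; [have := VZ _ _ Vp Vq; rewrite opprB addrA subrK | exact: LB].
  by rewrite ZL.
have [[p Pp]|noP] := pselect (exists p, P p).
  by apply: (@sub_finite_set _ _ [set p]) => [q Pq|]; [exact: uniqP | exact: finite_set1].
by apply: (@sub_finite_set _ _ set0) => // q Pq; apply: noP; exists q.
Qed.

Lemma closed_locally_finite_subB (M : topologicalZmodType) (A K : set M) :
  (forall x : M, exists2 N, nbhs x N & compact N) ->
  locally_finite A -> compact K -> closed K ->
  closed [set a - k | a in A & k in K].
Proof.
move=> lcM lfA cK clK; rewrite -openC openE => x nEx.
have [N nN cN] := lcM x.
have cNK : compact [set n + k | n in N & k in K].
  rewrite image2E; apply: continuous_compact; last exact: compact_setX.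
  have -> : uncurry +%R = (fun p : M * M => p.1 + p.2) by apply/funext => -[].
  by apply: continuous_subspaceT; exact: add_continuous.
(* Only the finitely many points of [A] in [N + K] can be [y + k] with [y] in
   [N]; for each of them, [a - y] avoids the closed set [K] near [x]. *)
have /finite_fsetP [F defF] := lfA _ cNK.
rewrite /interior; suff nF : nbhs x (\bigcap_(a in [set` F]) [set y | ~ K (a - y)]).
  apply: filterS (filterI nN nF) => y [Ny Fy] [a Aa [k Kk yE]].
  have NKa : [set n + k | n in N & k in K] a by exists y => //; exists k; rewrite // -yE subrK.
  by apply: (Fy a); [rewrite -defF | rewrite -yE opprB addrC subrK].
apply: (@filter_bigI _ _ F _ (nbhs x)) => a Fa; apply: open_nbhs_nbhs; split.
  apply: (@open_comp _ _ (fun y => a - y) (~` K)); last by rewrite openC.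
  by move=> y _; exact: continuous_subl.
have [Aa _] : (A `&` [set n + k | n in N & k in K]) a by rewrite defF.
by move=> /= Kax; apply: nEx; exists a => //; exists (a - x); rewrite // opprB addrC subrK.
Qed.

Lemma net_eventually_common (I : Type) (le : I -> I -> Prop) (P Q : I -> Prop) :
  directed_set le -> net_eventually le P -> net_eventually le Q ->
  exists i, P i /\ Q i.
Proof.
move=> [_ _ _ dir] [i hP] [j hQ]; have [k [ik jk]] := dir i j.
by exists k; split; [exact: hP | exact: hQ].
Qed.

Lemma quotient_net_cvg_nbhs (G H : topologicalZmodType) (L : set (G * H))
    (I : Type) (le : I -> I -> Prop) (x : I -> G * H) (y : G * H) (N : set (G * H)) :
  subgroup L -> quotient_net_cvg L le x y -> nbhs y N ->
  net_eventually le (fun i => exists2 l, L l & N (x i - l)).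
Proof.
move=> sL qc nN.
pose O := \bigcup_(l in L) [set z | N° (z - l)].
have oO : open O.
  apply: bigcup_open => l _.
  apply: (@open_comp _ _ (fun z : G * H => z - l)); last exact: open_interior.
  by move=> z _; exact: (@continuous_subr (prod_group G H)).
have sO : saturated L O.
  move=> z l' [l Ll Nl] Ll'; exists (l + l'); first exact: subgroupD.
  by rewrite /= opprD addrACA subrr addr0.
have Oy : O y by exists 0; [case: sL | rewrite /= subr0; exact: nN].
have [i0 hi0] := qc O oO sO Oy.
by exists i0 => i /hi0 [l Ll /interior_subset]; exists l.
Qed.

Lemma locally_finite_translate (M : topologicalZmodType) (c : M) (A : set M) :
  locally_finite A -> locally_finite (translate c A).
Proof.
move=> lfA K cK.
have cKc : compact [set k - c | k in K].
  by apply: continuous_compact => //; apply: continuous_subspaceT; exact: continuous_subr.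
apply: sub_finite_set (finite_image (+%R c) (lfA _ cKc)).
move=> _ [[a Aa <-] Kca]; exists a => //; split => //.
by exists (c + a); rewrite // addrC addKr.
Qed.

Lemma Lambda_locally_finite (G H : topologicalZmodType) (L : set (G * H)) (W : set H) :
  locally_finite L -> compact W -> locally_finite (Lambda L W).
Proof.
move=> lfL cW K cK.
apply: sub_finite_set (finite_image fst (lfL _ (compact_setX cK cW))).
by move=> _ [[p [Lp Wp] <-] Kp]; exists p.
Qed.

Lemma bump_function (R : realType) (T : topologicalType) (A V : set T) (z : T) :
  hausdorff_space T -> locally_compact [set: T] ->
  locally_finite A -> open V -> V z ->
  exists f : T -> R, [/\ Cc f, (forall x, 0 <= f x), f z = 1,
     (forall x, ~ V x -> f x = 0) & (forall x, A x -> x <> z -> f x = 0)].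
Proof.
move=> hT lcT lfA oV Vz.
have [K nK [cK _]] := lcT z I; rewrite withinET in nK.
pose B := ~` (V `&` K°) `|` ((A `&` K) `\` [set z]).
have cB : closed B.
  apply: closedU; first by apply: open_closedC; apply: openI => //; exact: open_interior.
  apply: (proj1 accessible_finite_set_closed (hausdorff_accessible hT)).
  by apply: sub_finite_set (lfA K cK) => x [].
have nBz : ~ B z by case=> [[]|[_ /= //]]; split.
have sep := @locally_compact_completely_regular T R lcT hT z B cB nBz.
pose u := Urysohn (R := R) [set z] B.
have u0 : u z = 0 by apply: (Urysohn_sub0 sep); exists z.
have u1 x : B x -> u x = 1 by move=> Bx; apply: (Urysohn_sub1 sep); exists x.
have u_le1 x : u x <= 1.
  have := @Urysohn_range _ R [set z] B (u x) (ex_intro2 _ _ x I erefl).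
  by rewrite /= in_itv => /andP[].
exists (fun x => 1 - u x); split.
- split; first by move=> x; exact: (cvgB (cvg_cst (1 : R)) (@Urysohn_continuous T R _ _ x)).
  by exists K; split=> // x nKx; rewrite u1 ?subrr //; left=> -[_ /interior_subset].
- by move=> x; rewrite subr_ge0.
- by rewrite u0 subr0.
- by move=> x nVx; rewrite u1 ?subrr //; left=> -[].
- move=> x Ax xz; rewrite u1 ?subrr //.
  by have [Kx|nKx] := pselect (K x); [right | left=> -[_ /interior_subset]].
Qed.

Lemma dirac_comb_ge (R : realType) (T : topologicalType) (A K : set T) (f : T -> R) (y : T) :
  (forall x, 0 <= f x) -> (forall x, ~ K x -> f x = 0) -> finite_set (A `&` K) -> A y ->
  f y <= dirac_comb A f.
Proof.
move=> f0 fK finAK Ay; rewrite /dirac_comb.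
rewrite -(fsbig_widen (A `&` K)) //; last first.
  by move=> x [Ax nAKx]; rewrite /= fK // => Kx; exact: nAKx.
have [Ky|nKy] := pselect (K y); last by rewrite fK //; exact: fsumr_ge0.
by rewrite (fsbigD1 y) //= lerDl; exact: fsumr_ge0.
Qed.

Lemma dirac_comb_neq0 (R : realType) (T : topologicalType) (A : set T) (f : T -> R) :
  dirac_comb A f != 0 -> exists2 y, A y & f y != 0.
Proof.
apply: contraNP => nAf; apply/eqP/fsbig1 => x Ax.
by apply/eqP; apply: contra_notT nAf => fx; exists x.
Qed.

Lemma dirac_comb_set1 (R : realType) (T : topologicalType) (A : set T) (f : T -> R) (a : T) :
  A a -> (forall x, A x -> x <> a -> f x = 0) -> dirac_comb A f = f a.
Proof.
move=> Aa fA; rewrite /dirac_comb -(fsbig_widen [set a] A f) ?fsbig_set1 //.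
  by move=> x ->.
by move=> x [Ax nxa]; rewrite /= fA // => xa; apply: nxa.
Qed.

Section CutAndProject.
Variables (R : realType) (G H : topologicalZmodType) (L : set (G * H)).
Variables (W : set H) (Gam Gam' : set G).
Variables (I : Type) (le : I -> I -> Prop) (sa : I -> G) (s : G) (t : H).
Hypotheses (hG : hausdorff_space G) (lcG : locally_compact [set: G]).
Hypotheses (hH : hausdorff_space H) (lcH : locally_compact [set: H]).
Hypotheses (sL : subgroup L) (lfL : locally_finite L).
Hypotheses (cW : compact W) (GamW : Gam `<=` Lambda L W).
Hypotheses (dir : directed_set le) (lfGam' : locally_finite Gam').
Hypothesis vague : vague_net_cvg R le (fun i => translate (sa i) Gam) Gam'.
Hypothesis qcvg : quotient_net_cvg L le (fun i => (- sa i, 0)) (s, t).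

Let lf_translate_Gam i : locally_finite (translate (sa i) Gam).
Proof.
apply: locally_finite_translate => K cK.
by apply: sub_finite_set (Lambda_locally_finite lfL cW cK) => x [/GamW].
Qed.

Lemma Lambda_translate_sub (U : set H) : open U -> Lambda L U `<=` Gam ->
  Lambda L (translate t U) `<=` translate s Gam'.
Proof.
move=> oU LUGam _ [p [Lp [u Uu pu]] <-].
exists (p.1 - s); last by rewrite addrC subrK.
apply: contrapT => nGam'.
have [f [[cf [K [cK fK]]] f0 f1 _ fGam']] :=
  bump_function R hG lcG lfGam' (z := p.1 - s) openT Logic.I.
have comb0 : dirac_comb Gam' f = 0.
  by apply: fsbig1 => x Gx; apply: fGam' => // xs; apply: nGam'; rewrite -xs.
have nN : nbhs (s, t) [set q : G * H | 1/2 < f (p - q).1 /\ U (p - q).2].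
  apply: (@continuous_subl (prod_group G H) p (s, t) ([set x | 1/2 < f x] `*` U)).
  exists ([set x | 1/2 < f x], U) => //.
  split.
  - apply: (cf (p.1 - s) [set r : R | 1/2 < r]); apply: open_nbhs_nbhs.
    by split; [exact: open_gt | rewrite /= f1; lra].
  - by apply: open_nbhs_nbhs; split; rewrite //= -pu addrC addKr.
have cf_Cc : Cc f by split=> //; exists K.
have half_gt0 : (0 : R) < 1/2 by lra.
have [i [[l Ll [fl Ul]] close]] := net_eventually_common dir
  (quotient_net_cvg_nbhs sL qcvg nN) (vague cf_Cc half_gt0).
rewrite comb0 subr0 in close; move: Ul; rewrite /= sub0r opprK => Ul.
have Gm : Gam (p + l).1 by apply: LUGam; exists (p + l) => //; split=> //; exact: subgroupD.
have fy : 1/2 < f (sa i + (p + l).1).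
  by move: fl; rewrite /= opprB opprK addrA addrC.
have := dirac_comb_ge f0 fK (lf_translate_Gam i cK) (ex_intro2 _ _ _ Gm erefl).
have := ler_norm (dirac_comb (translate (sa i) Gam) f).
lra.
Qed.

Lemma closed_Lambda_translate :
  closed [set q : G * H | Lambda L (translate q.2 W) q.1].
Proof.
have -> : [set q : G * H | Lambda L (translate q.2 W) q.1] =
    [set l - k | l in L & k in [set 0] `*` W] :> set (prod_group G H).
  apply/seteqP; split.
  - move=> [x y] [l [Ll [w Ww lw]] lx]; exists l => //; exists (0, w) => //.
    by apply: injective_projections; rewrite /= ?subr0 // -lw addrK.
  - move=> _ [l Ll [k [/= k0 Wk] <-]]; exists l; last by rewrite /= k0 subr0.
    by split=> //; exists k.2; rewrite //= subrK.
apply: (@closed_locally_finite_subB (prod_group G H) L ([set 0] `*` W)).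
- exact: compact_nbhs_prod.
- exact: lfL.
- by apply: compact_setX => //; exact: compact_set1.
- apply: closed_setX; last exact: compact_closed.
  exact: (@accessible_closed_set1 G (hausdorff_accessible hG) 0).
Qed.

Lemma translate_sub_Lambda : translate s Gam' `<=` Lambda L (translate t W).
Proof.
move=> _ [a Gam'a <-]; apply: contrapT => nLam.
have nE : nbhs ((a, 0) + (s, t) : prod_group G H)
    (~` [set q : G * H | Lambda L (translate q.2 W) q.1]).
  apply: open_nbhs_nbhs; split; first exact: closed_openC closed_Lambda_translate.
  by rewrite /= add0r addrC.
have [[P N] /= [nP nN] sPN] := @add_continuous (prod_group G H) ((a, 0), (s, t)) _ nE.
have nV : nbhs a [set v : G | P (v, 0)].
  have cv : continuous (fun v : G => (v, 0 : H)).
    by move=> v; apply: cvg_pair; [exact: cvg_id | exact: cvg_cst].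
  exact: (cv a _ nP).
have [f [[cf [K [cK fK]]] f0 fa fV fGam']] :=
  bump_function R hG lcG lfGam' (@open_interior _ _) nV.
have cf_Cc : Cc f by split=> //; exists K.
have [i [[l Ll Nl] close]] := net_eventually_common dir
  (quotient_net_cvg_nbhs sL qcvg nN) (vague cf_Cc ltr01).
rewrite (dirac_comb_set1 Gam'a fGam') fa in close.
have [_ [g Gg <-] fy] : exists2 y, translate (sa i) Gam y & f y != 0.
  apply: dirac_comb_neq0; apply: contraTneq close => ->.
  by rewrite sub0r normrN normr1 ltxx.
have Py : P (sa i + g, 0).
  apply: (@interior_subset _ [set v | P (v, 0)]).
  by apply: contrapT => nV'; move/eqP: fy; apply; exact: fV.
have [r [Lr Wr] rg] := GamW Gg.
apply: (sPN ((sa i + g, 0), (- sa i, 0) - l)); first by split.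
rewrite /= !add0r addrACA subrr add0r; exists (r - l); last by rewrite /= rg.
by split; [case: sL => _; apply | exists r.2; rewrite //= addrC].
Qed.
End CutAndProject.

Theorem lemma4p1 (R : realType) (G H : topologicalZmodType) (L : set (G * H))
  (U W : set H) (Gam Gam' : set G)
  (I : Type) (le : I -> I -> Prop) (sa : I -> G) (s : G) (t : H) :
  cut_and_project_scheme L ->
  open U -> U !=set0 -> compact W -> U `<=` W ->
  Lambda L U `<=` Gam -> Gam `<=` Lambda L W ->
  directed_set le ->
  locally_finite Gam' ->
  vague_net_cvg R le (fun i => translate (sa i) Gam) Gam' ->
  quotient_net_cvg L le (fun i => (- sa i, 0)) (s, t) ->
  Lambda L (translate t U) `<=` translate s Gam' /\
  translate s Gam' `<=` Lambda L (translate t W).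
Proof.
move=> [[hG lcG] [hH lcH] [sL dL _] _ _] oU _ cW _ LUGam GamLW dir lfGam' vague qcvg.
have lfL := @discrete_subgroup_locally_finite (prod_group G H) L sL dL.
split.
- exact: Lambda_translate_sub hG lcG sL lfL cW GamLW dir lfGam' vague qcvg _ oU LUGam.
- exact: translate_sub_Lambda hG lcG hH lcH sL lfL cW GamLW dir lfGam' vague qcvg.
Qed.
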